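(* The two-field star-triangle map is 4D consistent in the following sense. Let $n\in\mathbb Z^4$ and let generic data $(a^{ij},c^{ij})$ be given on the six plaquettes $\sigma^{ij}(n)$, $1\le i<j\le4$. (1) If $n$ is black: in each of the four 3D cubes at $n$ (directions $i,j,k$) apply $F$ to obtain data on the plaquettes $\sigma^{ij}(n+e_k)$; then, for each $\ell$ and each triple $\{i,j,k\}$ not containing $\ell$, apply $G$ in the 3D cube at the (white) vertex $n+e_\ell$ with directions $i,j,k$ to obtain data on $\sigma^{ij}(n+e_\ell+e_k)$, $\sigma^{jk}(n+e_\ell+e_i)$, $\sigma^{ki}(n+e_\ell+e_j)$. Each plaquette $\sigma^{ij}(n+e_k+e_\ell)$ thereby receives two values, one from the cube at $n+e_\ell$ (directions $i,j,k$) and one from the cube at $n+e_k$ (directions $i,j,\ell$). Then the two $c$-values coincide and the squares of the two $a$-values coincide. (2) If $n$ is white: in each of the four 3D cubes at $n$ apply $G$ (with an arbitrary choice of the sign of $D$ in each cube) to obtain data on $\sigma^{ij}(n+e_k)$; then apply $F$ in the 3D cubes at the (black) vertices $n+e_\ell$. Then the two values of $a$ and the two values of $c$ obtained for each plaquette $\sigma^{ij}(n+e_k+e_\ell)$ coincide, for any choice of the signs.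
   Context: Vertices of $\mathbb Z^4$ with even coordinate sum are black, others white; $e_i$ are the unit vectors. A plaquette $\sigma^{ij}(m)=(m,m+e_i,m+e_i+e_j,m+e_j)$ carries numbers $a^{ij}(m),c^{ij}(m)$ with $a^{ji}=-a^{ij}$, $c^{ji}=-c^{ij}$. For a 3D cube at $m$ with directions $(i,j,k)$, the ''base'' data are those on $\sigma^{ij}(m),\sigma^{jk}(m),\sigma^{ki}(m)$, denoted $(a^{ij},c^{ij}),(a^{jk},c^{jk}),(a^{ki},c^{ki})$, and the ''far'' data are those on $\sigma^{ij}(m+e_k),\sigma^{jk}(m+e_i),\sigma^{ki}(m+e_j)$, denoted $(a^{ij}_k,c^{ij}_k),(a^{jk}_i,c^{jk}_i),(a^{ki}_j,c^{ki}_j)$. The two-field star-triangle map $F$ (far in terms of base) is $$a^{ij}_k=\frac{a^{jk}a^{ki}}{c^{ij}+c^{jk}+c^{ki}},\qquad c^{ij}_k=\frac12\left(c^{jk}+c^{ki}-c^{ij}-\frac{(a^{jk})^2+(a^{ki})^2-(a^{ij})^2}{c^{ij}+c^{jk}+c^{ki}}\right)$$ and cyclically; these formulas are compatible with reordering of $(i,j,k)$. Its (two-valued) inverse $G$ (base in terms of far) is $$c^{ij}=c^{jk}_i+c^{ki}_j+\frac{a^{jk}_ia^{ki}_j}{a^{ij}_k},\qquad a^{ij}=\frac{D}{a^{ij}_k},\ a^{jk}=\frac{D}{a^{jk}_i},\ a^{ki}=\frac{D}{a^{ki}_j},$$ where $D$ is either square root of $D^2=(a^{ij}_ka^{jk}_i)^2+(a^{jk}_ia^{ki}_j)^2+(a^{ki}_ja^{ij}_k)^2+2a^{ij}_ka^{jk}_ia^{ki}_j(c^{ij}_k+c^{jk}_i+c^{ki}_j)$.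 In the procedures of the claim, $F$ or $G$ ''applied in the cube at $m$'' computes the far data of that cube from its base data. *)

From mathcomp Require Import all_boot all_order all_algebra.
Set Implicit Arguments. Unset Strict Implicit. Unset Printing Implicit Defensive.
Import Order.TTheory GRing.Theory Num.Theory.
Local Open Scope ring_scope.

(* Directions e_0..e_3 of Z^4 are indexed by 'I_4.
   Plaquette data around a vertex m: functions xa xc : 'I_4 -> 'I_4 -> R,
   xa i j = a^{ij}(m) (data on sigma^{ij}(m)), antisymmetric in (i,j). *)

Definition antisym (R : numFieldType) (x : 'I_4 -> 'I_4 -> R) :=
  forall i j, x j i = - x i j.

Definition distinct3 (i j k : 'I_4) := [&& i != j, j != k & k != i].
Definition distinct4 (i j k l : 'I_4) :=
  [&& distinct3 i j k, l != i, l != j & l != k].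

(* the direction not in {i,j,k} (for pairwise distinct i,j,k) *)
Definition fourth (i j k : 'I_4) : 'I_4 := inord (6 - (i + j + k))%N.

Section Maps.
Variable R : numFieldType.
Implicit Types (xa xc : 'I_4 -> 'I_4 -> R) (D : R).

(* Map F in the cube with directions (i,j,k): far data on sigma^{ij}(m+e_k)
   from the base data xa, xc on sigma^{..}(m). *)
Definition Fa xa xc (i j k : 'I_4) : R :=
  xa j k * xa k i / (xc i j + xc j k + xc k i).
Definition Fc xa xc (i j k : 'I_4) : R :=
  2^-1 * (xc j k + xc k i - xc i j
          - (xa j k ^+ 2 + xa k i ^+ 2 - xa i j ^+ 2) / (xc i j + xc j k + xc k i)).

(* Map G used as base -> far in the cube with directions (i,j,k): the
   "far" variables of the formula for G are the base data xa, xc of the cube,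
   and its outputs are the far data on sigma^{ij}(m+e_k). *)
Definition GD2 xa xc (i j k : 'I_4) : R :=
  (xa i j * xa j k) ^+ 2 + (xa j k * xa k i) ^+ 2 + (xa k i * xa i j) ^+ 2
  + 2 * xa i j * xa j k * xa k i * (xc i j + xc j k + xc k i).
Definition Gc xa xc (i j k : 'I_4) : R :=
  xc j k + xc k i + xa j k * xa k i / xa i j.
Definition Ga xa D (i j : 'I_4) : R := D / xa i j.

End Maps.

From mathcomp Require Import all_boot all_order all_algebra zify ring.
Import Order.TTheory GRing.Theory Num.Theory.
Set Implicit Arguments. Unset Strict Implicit. Unset Printing Implicit Defensive.
Local Open Scope ring_scope.

(* Once antisymmetry orients the six edges of the tetrahedron ijkl, both
   consistency statements are identities between rational functions of the six
   a's and six c's at n.  In the white case the c's cancel from the denominator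
   of F: the cyclic sum of the three c-values produced by G in the cube at
   n + e_l is -P / (a_ij a_jk a_ki), where P sums, over the three pairs of
   opposite edges of ijkl, the product of the four other edge values.  As P is
   symmetric in k and l, both a-values on sigma^{ij}(n + e_k + e_l) equal
   -D_i D_j a_ij / P, and the choice of signs of the D's enters the c-values
   only through their squares. *)

Section Directions.
Implicit Types i j k l : 'I_4.

Lemma distinct4_distinct3 i j k l : distinct4 i j k l -> distinct3 i j k.
Proof. by case/and4P. Qed.

Lemma distinct4_rot i j k l : distinct4 i j k l -> distinct4 j k i l.
Proof.
case/and4P=> /and3P[ij jk ki] li lj lk.
by rewrite /distinct4 /distinct3 ij jk ki li lj lk.
Qed.

Lemma distinct4_swap i j k l : distinct4 i j k l -> distinct4 i j l k.
Proof.
case/and4P=> /and3P[ij jk ki] li lj lk.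
by rewrite /distinct4 /distinct3 ij (eq_sym j) lj li ki (eq_sym k j) jk
  (eq_sym k l) lk.
Qed.

Lemma distinct4_neq i j k l : distinct4 i j k l ->
  [/\ i != j, j != k, k != i, i != l & j != l].
Proof. by case/and4P=> /and3P[-> -> ->] li lj _; rewrite ![_ == l]eq_sym li lj. Qed.

Lemma fourthE i j k l : distinct4 i j k l -> fourth i j k = l.
Proof.
case/and4P=> /and3P[ij jk ki] li lj lk; apply: val_inj; rewrite /fourth /=.
move: ij jk ki li lj lk; rewrite -!(inj_eq val_inj) /=.
by have := ltn_ord i; have := ltn_ord j; have := ltn_ord k; have := ltn_ord l;
  move=> *; rewrite inordK; lia.
Qed.

End Directions.

(* [field] treats x p q and x q p as unrelated atoms, so every edge variable is
   first rewritten to one of the orientations ij, jk, ki, il, jl, kl. *)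
Ltac orient Hx i j k l :=
  rewrite ?(Hx i j) ?(Hx j k) ?(Hx k i) ?(Hx i l) ?(Hx j l) ?(Hx k l).

Ltac neq0_from_hyps :=
  match goal with
  | H : is_true (?y != 0) |- is_true (?x != 0) =>
      first [ exact: H
            | rewrite [x](_ : _ = y); [exact: H | ring]
            | rewrite [x](_ : _ = - y); [by rewrite oppr_eq0 | ring] ]
  end.

Ltac field_from_hyps := field; repeat (apply/andP; split); neq0_from_hyps.

Section BlackVertex.
Variable R : numFieldType.
Variables a c : 'I_4 -> 'I_4 -> R.
Hypotheses (Ha : antisym a) (Hc : antisym c).
Hypothesis HS : forall i j k, distinct3 i j k -> c i j + c j k + c k i != 0.
Hypothesis HaF : forall i j l, distinct3 i j l -> Fa a c i j l != 0.

Definition aF l p q := Fa a c p q l.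
Definition cF l p q := Fc a c p q l.

Lemma Fa_neq0 i j l : Fa a c i j l != 0 -> (a j l != 0) && (a l i != 0).
Proof. by rewrite /Fa !mulf_eq0 !negb_or => /andP[]. Qed.

Lemma black_denominators_neq0 i j k l : distinct4 i j k l ->
  [/\ c i j + c j k + c k i != 0, c i j + c j l + c l i != 0,
      c j k + c k l + c l j != 0, c k i + c i l + c l k != 0 &
      [&& a j l != 0, a l i != 0, a j k != 0 & a k i != 0]].
Proof.
move=> Hd; have Hd' := distinct4_swap Hd; have Hjki := distinct4_rot Hd.
have Hjkl := distinct4_distinct3 (distinct4_swap Hjki).
have Hkil := distinct4_distinct3 (distinct4_swap (distinct4_rot Hjki)).
have /Fa_neq0/andP[-> ->] := HaF (distinct4_distinct3 Hd').
have /Fa_neq0/andP[-> ->] := HaF (distinct4_distinct3 Hd).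
by split=> //; apply: HS;
  [exact: distinct4_distinct3 Hd | exact: distinct4_distinct3 Hd' | |].
Qed.

Lemma Gc_aF_cF_swap i j k l : distinct4 i j k l ->
  Gc (aF l) (cF l) i j k = Gc (aF k) (cF k) i j l.
Proof.
move=> /black_denominators_neq0; rewrite /Gc /aF /cF /Fa /Fc.
orient Ha i j k l; orient Hc i j k l.
by move=> [s1 s2 s3 s4 /and4P[a1 a2 a3 a4]]; field_from_hyps.
Qed.

Lemma GD2_aF_cF_swap i j k l : distinct4 i j k l ->
  GD2 (aF l) (cF l) i j k / aF l i j ^+ 2 = GD2 (aF k) (cF k) i j l / aF k i j ^+ 2.
Proof.
move=> /black_denominators_neq0; rewrite /GD2 /aF /cF /Fa /Fc.
orient Ha i j k l; orient Hc i j k l.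
by move=> [s1 s2 s3 s4 /and4P[a1 a2 a3 a4]]; field_from_hyps.
Qed.

End BlackVertex.

Section WhiteVertex.
Variable R : numFieldType.
Variables (a c : 'I_4 -> 'I_4 -> R) (D : 'I_4 -> R).
Hypotheses (Ha : antisym a) (Hc : antisym c).
Hypothesis Ha0 : forall i j, i != j -> a i j != 0.
Hypothesis HD : forall i j k m, distinct4 i j k m -> D m ^+ 2 = GD2 a c i j k.

Definition aG l p q := Ga a (D (fourth p q l)) p q.
Definition cG l p q := Gc a c p q l.

Definition opp_edge_sum i j k l :=
  a j k * a k i * a i l * a j l + a k i * a i j * a j l * a k l
  + a i j * a j k * a k l * a i l.

Lemma opp_edge_sum_swap i j k l : opp_edge_sum i j l k = opp_edge_sum i j k l.
Proof. by rewrite /opp_edge_sum; orient Ha i j k l; ring. Qed.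

Lemma cG_cycle_sum i j k l : a i j != 0 -> a j k != 0 -> a k i != 0 ->
  cG l i j + cG l j k + cG l k i = - opp_edge_sum i j k l / (a i j * a j k * a k i).
Proof.
move=> aij ajk aki; rewrite /cG /Gc /opp_edge_sum.
orient Ha i j k l; orient Hc i j k l.
by field_from_hyps.
Qed.

Lemma opp_edge_sum_neq0 i j k l : distinct4 i j k l ->
  cG l i j + cG l j k + cG l k i != 0 -> opp_edge_sum i j k l != 0.
Proof.
case/distinct4_neq=> ij jk ki _ _; rewrite cG_cycle_sum ?Ha0 //.
by apply: contraNneq => ->; rewrite oppr0 mul0r.
Qed.

Lemma aG_cycleE i j k l : distinct4 i j k l ->
  [/\ aG l i j = D k / a i j, aG l j k = D i / a j k & aG l k i = D j / a k i].
Proof.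
move=> Hd; have Hjki := distinct4_rot Hd; have Hkij := distinct4_rot Hjki.
by rewrite /aG /Ga (fourthE (distinct4_swap Hd)) (fourthE (distinct4_swap Hjki))
  (fourthE (distinct4_swap Hkij)).
Qed.

Lemma Fa_aG_cG i j k l : distinct4 i j k l -> opp_edge_sum i j k l != 0 ->
  Fa (aG l) (cG l) i j k = - (D i * D j * a i j) / opp_edge_sum i j k l.
Proof.
move=> Hd HP; have [ij jk ki _ _] := distinct4_neq Hd.
have aij := Ha0 ij; have ajk := Ha0 jk; have aki := Ha0 ki.
rewrite /Fa cG_cycle_sum //; have [_ -> ->] := aG_cycleE Hd.
by field_from_hyps.
Qed.

Lemma Fa_aG_cG_swap i j k l : distinct4 i j k l -> opp_edge_sum i j k l != 0 ->
  Fa (aG l) (cG l) i j k = Fa (aG k) (cG k) i j l.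
Proof.
move=> Hd HP; have Hd' := distinct4_swap Hd.
have HP' : opp_edge_sum i j l k != 0 by rewrite opp_edge_sum_swap.
by rewrite Fa_aG_cG // Fa_aG_cG // opp_edge_sum_swap.
Qed.

Lemma Fc_aG_cG_swap i j k l : distinct4 i j k l -> opp_edge_sum i j k l != 0 ->
  Fc (aG l) (cG l) i j k = Fc (aG k) (cG k) i j l.
Proof.
move=> Hd HP; have Hd' := distinct4_swap Hd; have Hjki := distinct4_rot Hd.
have [ij jk ki il jl] := distinct4_neq Hd.
have aij := Ha0 ij; have ajk := Ha0 jk; have aki := Ha0 ki.
have ajl := Ha0 jl; have ail := Ha0 il.
have ali : a l i != 0 by rewrite Ha0 // eq_sym.
rewrite /Fc !cG_cycle_sum // [opp_edge_sum i j l k]opp_edge_sum_swap.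
have [-> -> ->] := aG_cycleE Hd; have [-> -> ->] := aG_cycleE Hd'.
rewrite !expr_div_n (HD Hd) (HD Hd') (HD (distinct4_swap Hjki)).
rewrite (HD (distinct4_swap (distinct4_rot Hjki))).
move: HP; rewrite /GD2 /cG /Gc /opp_edge_sum.
orient Ha i j k l; orient Hc i j k l => HP.
by field_from_hyps.
Qed.

End WhiteVertex.

Theorem theorem10 (R : numFieldType) :
  (* (1) n black: F in the four cubes at n, then G in the cubes at n + e_l *)
  (forall (a c : 'I_4 -> 'I_4 -> R) (D : 'I_4 -> R),
    antisym a -> antisym c ->
    let A1 := fun l p q => Fa a c p q l in   (* a on sigma^{pq}(n+e_l) *)
    let C1 := fun l p q => Fc a c p q l in   (* c on sigma^{pq}(n+e_l) *)
    (* genericity: all denominators are nonzero *)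
    (forall i j k, distinct3 i j k -> c i j + c j k + c k i != 0) ->
    (forall i j l, distinct3 i j l -> A1 l i j != 0) ->
    (* D l : a square root of D^2 in the cube at n+e_l (directions <> l) *)
    (forall i j k l, distinct4 i j k l -> D l ^+ 2 = GD2 (A1 l) (C1 l) i j k) ->
    forall i j k l, distinct4 i j k l ->
      Gc (A1 l) (C1 l) i j k = Gc (A1 k) (C1 k) i j l /\
      Ga (A1 l) (D l) i j ^+ 2 = Ga (A1 k) (D k) i j ^+ 2) /\
  (* (2) n white: G in the four cubes at n (arbitrary signs), then F *)
  (forall (a c : 'I_4 -> 'I_4 -> R) (D : 'I_4 -> R),
    antisym a -> antisym c ->
    (* D m : either square root of D^2 in the cube at n with directions <> m *)
    (forall i j k m, distinct4 i j k m -> D m ^+ 2 = GD2 a c i j k) ->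
    let B1 := fun l p q => Ga a (D (fourth p q l)) p q in (* a on sigma^{pq}(n+e_l) *)
    let E1 := fun l p q => Gc a c p q l in                (* c on sigma^{pq}(n+e_l) *)
    (* genericity: all denominators are nonzero *)
    (forall i j, i != j -> a i j != 0) ->
    (forall i j k l, distinct4 i j k l -> E1 l i j + E1 l j k + E1 l k i != 0) ->
    forall i j k l, distinct4 i j k l ->
      Fa (B1 l) (E1 l) i j k = Fa (B1 k) (E1 k) i j l /\
      Fc (B1 l) (E1 l) i j k = Fc (B1 k) (E1 k) i j l).

Proof.
split=> a c D Ha Hc.
  move=> A1 C1 HS HaF HD i j k l Hd; subst A1 C1.
  split; first exact (Gc_aF_cF_swap Ha Hc HS HaF Hd).
  rewrite /Ga (expr_div_n (D l)) (expr_div_n (D k)).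
  rewrite (HD _ _ _ _ Hd) (HD _ _ _ _ (distinct4_swap Hd)).
  exact (GD2_aF_cF_swap Ha Hc HS HaF Hd).
move=> HD B1 E1 Ha0 HE i j k l Hd; subst B1 E1.
have HP := opp_edge_sum_neq0 Ha Hc Ha0 Hd (HE _ _ _ _ Hd).
split; first exact (Fa_aG_cG_swap D Ha Hc Ha0 Hd HP).
exact (Fc_aG_cG_swap Ha Hc Ha0 HD Hd HP).
Qed.
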